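(* Let $T=(V,E)$ be a finite rooted binary tree, $\Pr$ a probability distribution over a finite set of queries, $u\in V$ a node with left child $\ell(u)$ and right child $r(u)$, and $R_u\subseteq T(u)$. Let $R_{r(u)}=T(r(u))\cap R_u$ and $R_{\ell(u)}=T(\ell(u))\cap R_u$. Then for every $v\in A(u)\cup\{\epsilon\}$: $$B_u(R_u\cup\{v\})=\begin{cases}B_u(\{u,v\})+B_{r(u)}(R_{r(u)}\cup\{u\})+B_{\ell(u)}(R_{\ell(u)}\cup\{u\}), & \text{if } u\in R_u,\\ B_{r(u)}(R_{r(u)}\cup\{v\})+B_{\ell(u)}(R_{\ell(u)}\cup\{v\}), & \text{otherwise.}\end{cases}$$
   Context: $T=(V,E)$ is a finite rooted tree in which every node has at most two children. $T(u)$ is the set of nodes of the subtree rooted at $u$ (including $u$); $A(u)$ is the set of proper ancestors of $u$. Each non-leaf node is associated with a variable of a finite set $X$; $\mathrm{vars}(u)$ is the set of variables associated with nodes of $T(u)$. Each query $q$ determines $Z_q\subseteq X$. For $R\subseteq V$, $w\in V$: $I_q(w,R)=1$ iff $w\in R$, $\mathrm{vars}(w)\subseteq Z_q$, and no $x\in A(w)\cap R$ has $\mathrm{vars}(x)\subseteq Z_q$; else $0$; $\mathbb{E}[I(w,R)]=\sum_q\Pr(q)I_q(w,R)$. Nodes have partial costs $c(x)$; total cost $C(w)=\sum_{x\in T(w)}c(x)$. Partial benefit: $B_u(R)=\sum_{w\in R\cap T(u)}\mathbb{E}[I(w,R)]C(w)$. $\epsilon$ is an auxiliary symbol not in $V$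 (meaning ''no ancestor selected''), and by convention $\epsilon$ is ignored in set arguments: $B_u(S\cup\{\epsilon\}):=B_u(S)$. *)

From mathcomp Require Import all_boot all_order all_algebra.
Set Implicit Arguments. Unset Strict Implicit. Unset Printing Implicit Defensive.
Import Order.TTheory GRing.Theory Num.Theory.
Local Open Scope ring_scope.

(* A finite rooted tree on the node type V is given by its parent map
   [par : V -> option V] ([par x = None] iff x is the root). *)

Section Tree.
Variables (V : finType) (par : V -> option V).

Definition par_rel : rel V := fun a b => par a == Some b.

Definition anc (x : V) : {set V} :=
  [set y | if par x is Some z then connect par_rel z y else false].

Definition subtree (u : V) : {set V} := [set w | (w == u) || (u \in anc w)].

Definition children (x : V) : {set V} := [set y | par y == Some x].

Definition is_leaf (x : V) : bool := children x == set0.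

Definition rooted_binary_tree : Prop :=
  [/\ exists! r, par r = None,
      forall x, x \notin anc x
    & forall x, #|children x| <= 2]%N.

Variables (X : finType) (var : V -> X).

(* vars(u): variables associated with the non-leaf nodes of T(u)
   (the value of [var] at leaves is irrelevant) *)
Definition vars (u : V) : {set X} :=
  [set var x | x in [set x in subtree u | ~~ is_leaf x]].

Variables (Q : finType) (Z : Q -> {set X}).

Definition Iq (q : Q) (w : V) (R : {set V}) : bool :=
  [&& w \in R, vars w \subset Z q &
      [forall x in R, (x \in anc w) ==> ~~ (vars x \subset Z q)]].

Variables (F : realFieldType) (Pr : Q -> F) (c : V -> F).

Definition is_prob : Prop := (forall q, 0 <= Pr q) /\ \sum_q Pr q = 1.

Definition EI (w : V) (R : {set V}) : F := \sum_q Pr q * (Iq q w R)%:R.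

Definition Ctot (w : V) : F := \sum_(x in subtree w) c x.

Definition Bu (u : V) (R : {set V}) : F :=
  \sum_(w in R :&: subtree u) EI w R * Ctot w.

End Tree.

(* S ∪ {v} for v ∈ V ∪ {ε}, with ε = None ignored *)
Definition addopt (V : finType) (S : {set V}) (v : option V) : {set V} :=
  if v is Some x then x |: S else S.

From mathcomp Require Import all_boot all_order all_algebra.
Import Order.TTheory GRing.Theory Num.Theory.
Set Implicit Arguments. Unset Strict Implicit. Unset Printing Implicit Defensive.
Local Open Scope ring_scope.

(* Fix a query q. A node w of R contributes to B(R) iff w is covered by q
   (vars w \subset Z q) and no selected proper ancestor of w is covered.
   Coverage passes to descendants, since vars shrinks down the tree. For w
   below a child a of u, the selected ancestors of w in T(u) are u (if
   selected) and those in T(a); the extra node v above u matters only when u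
   is not selected, because if v is covered then so is u. So each summand of
   B_u(R_u ∪ {v}) equals the matching summand on the right-hand side, and the
   sum splits along R_u = (R_u ∩ {u}) ∪ R_r(u) ∪ R_l(u). *)

Section Subtrees.
Variables (V : finType) (par : V -> option V).
Local Notation anc := (anc par).
Local Notation T := (subtree par).
Local Notation e := (par_rel par).

Lemma connect_parE a b : connect e a b = (a == b) || (b \in anc a).
Proof.
apply/idP/orP => [|[/eqP->|]]; last 2 first.
- exact: connect0.
- rewrite inE; case par_a: (par a) => [p|] // p_b.
  by apply: connect_trans p_b; apply: connect1; rewrite /par_rel par_a.
case/connectP => [[|z s]] /=; first by move=> _ ->; left.
case/andP=> /eqP par_a s_path b_last; right.
by rewrite inE par_a; apply/connectP; exists s.
Qed.

Lemma mem_anc_parE x p y : par x = Some p -> (y \in anc x) = (y == p) || (y \in anc p).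
Proof. by move=> par_x; rewrite inE par_x connect_parE eq_sym. Qed.

Lemma mem_anc_par x p : par x = Some p -> p \in anc x.
Proof. by move/mem_anc_parE->; rewrite eqxx. Qed.

Lemma mem_subtree w u : (w \in T u) = connect e w u.
Proof. by rewrite connect_parE inE eq_sym. Qed.

Lemma subtree_refl u : u \in T u.
Proof. by rewrite mem_subtree connect0. Qed.

Lemma subtree_trans x y z : x \in T y -> y \in T z -> x \in T z.
Proof. rewrite !mem_subtree; exact: connect_trans. Qed.

Lemma anc_subtree x w : x \in anc w -> w \in T x.
Proof. by move=> x_w; rewrite inE x_w orbT. Qed.

Lemma par_subtree x p : par x = Some p -> x \in T p.
Proof. by move/mem_anc_par/anc_subtree. Qed.

Lemma anc_trans a b c : b \in anc a -> c \in anc b -> c \in anc a.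
Proof.
rewrite !inE; case: (par a) => [p|] // p_b; case par_b: (par b) => [q|] // q_c.
by apply: connect_trans p_b _; apply: connect_trans q_c; apply: connect1; rewrite /par_rel par_b.
Qed.

Lemma subtree_total w x y : w \in T x -> w \in T y -> (x \in T y) || (y \in T x).
Proof.
rewrite !mem_subtree => /connectP[s]; elim: s w => [|z s IHs] w /=; first by move=> _ -> ->.
case/andP=> /eqP par_w s_path x_last; rewrite connect_parE => /orP[/eqP<-|y_w].
  by apply/orP; right; apply/connectP; exists (z :: s) => //=; rewrite /par_rel par_w eqxx.
by apply: IHs s_path x_last _; move: y_w; rewrite inE par_w.
Qed.

Lemma subtree_child w u : w \in T u -> w != u -> exists2 c, par c = Some u & w \in T c.
Proof.
rewrite mem_subtree => /connectP[s]; elim: s w => [|z s IHs] w /=; first by move=> _ -> /eqP.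
case/andP=> /eqP par_w s_path u_last w_u.
have [<-|z_u] := eqVneq z u; first by exists w; rewrite ?subtree_refl.
have [c par_c z_c] := IHs z s_path u_last z_u; exists c => //.
by apply: subtree_trans z_c; rewrite mem_subtree connect1 // /par_rel par_w.
Qed.

Lemma children_pairE u a b :
  (#|children par u| <= 2)%N -> par a = Some u -> par b = Some u -> a != b ->
  children par u = [set a; b].
Proof.
move=> deg_u par_a par_b a_b; apply/esym/eqP; rewrite eqEcard cards2 a_b deg_u andbT.
by apply/subsetP => y; rewrite !inE => /orP[]/eqP->; rewrite ?par_a ?par_b.
Qed.

Hypothesis anc_irrefl : forall x, x \notin anc x.

Lemma subtree_notin_anc x u : x \in T u -> x \notin anc u.
Proof.
rewrite inE => /orP[/eqP->|u_x]; first exact: anc_irrefl.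
by apply/negP => x_u; move: (anc_irrefl u); rewrite (anc_trans x_u u_x).
Qed.

Lemma par_neq x p : par x = Some p -> x != p.
Proof. by move=> par_x; apply: contraNneq (anc_irrefl x) => {1}->; apply: mem_anc_par. Qed.

Section Child.
Variables (u a : V).
Hypothesis par_a : par a = Some u.

Lemma subtree_child_anc w : w \in T a -> u \in anc w.
Proof.
rewrite inE => /orP[/eqP->|a_w]; first exact: mem_anc_par.
exact: anc_trans a_w (mem_anc_par par_a).
Qed.

Lemma parent_notin_subtree : u \notin T a.
Proof. by apply/negP => /subtree_child_anc; apply/negP/anc_irrefl. Qed.

Lemma subtree_child_cases x w :
  x \in T u -> w \in T x -> w \in T a -> (x == u) || (x \in T a).
Proof.
move=> x_u w_x w_a; case/orP: (subtree_total w_x w_a) => [->|]; first by rewrite orbT.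
rewrite inE => /orP[/eqP->|]; first by rewrite subtree_refl orbT.
by rewrite (mem_anc_parE _ par_a) (negbTE (subtree_notin_anc x_u)) orbF => ->.
Qed.

End Child.

Lemma sibling_notin_subtree u a b :
  par a = Some u -> par b = Some u -> a != b -> a \notin T b.
Proof.
move=> par_a par_b a_b; rewrite inE negb_or a_b (mem_anc_parE _ par_a) negb_or par_neq //=.
exact/subtree_notin_anc/(par_subtree par_b).
Qed.

Lemma subtree_siblings_disjoint u a b w :
  par a = Some u -> par b = Some u -> a != b -> w \in T a -> w \notin T b.
Proof.
move=> par_a par_b a_b w_a; apply/negP => w_b.
have /negP a_notin_b := sibling_notin_subtree par_a par_b a_b.
have /negP b_notin_a : b \notin T a by apply: sibling_notin_subtree par_b par_a _; rewrite eq_sym.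
by case/orP: (subtree_total w_a w_b).
Qed.

Lemma subtree_binary_cases u a b w :
  (#|children par u| <= 2)%N -> par a = Some u -> par b = Some u -> a != b ->
  w \in T u -> w != u -> (w \in T a) || (w \in T b).
Proof.
move=> deg_u par_a par_b a_b w_u w_neq_u; have [c par_c w_c] := subtree_child w_u w_neq_u.
have /set2P[] : c \in [set a; b] by rewrite -(children_pairE deg_u par_a par_b a_b) inE par_c.
  by move=> c_a; rewrite -c_a w_c.
by move=> c_b; rewrite -c_b w_c orbT.
Qed.

Lemma sum_subtree_children (M : nmodType) u a b (R : {set V}) (f : V -> M) :
  (#|children par u| <= 2)%N -> par a = Some u -> par b = Some u -> a != b ->
  R \subset T u ->
  \sum_(w in R) f w =
    (if u \in R then f u else 0) + \sum_(w in T a :&: R) f w + \sum_(w in T b :&: R) f w.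
Proof.
move=> deg_u par_a par_b a_b R_u.
have sum_u : \sum_(w in R | w == u) f w = if u \in R then f u else 0.
  case: ifP => u_R.
    by apply: big_pred1 => w /=; case: (eqVneq w u) => [->|]; rewrite ?andbF ?andbT.
  by apply: big1 => w /andP[w_R /eqP w_u]; rewrite w_u u_R in w_R.
rewrite (bigID (pred1 u)) sum_u (bigID (mem (T a))) /= addrA.
congr (_ + _ + _); apply: eq_bigl => w; rewrite in_setI andbC.
all: case w_R: (w \in R); rewrite ?andbF ?andbT //.
  by have [->|] := eqVneq w u; rewrite ?andbT // andbF (negbTE (parent_notin_subtree par_a)).
have [->|w_neq_u] := eqVneq w u; first by rewrite andbF (negbTE (parent_notin_subtree par_b)).
have [w_a|w_a] := boolP (w \in T a).
  by rewrite (negbTE (subtree_siblings_disjoint par_a par_b a_b w_a)).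
have := subtree_binary_cases deg_u par_a par_b a_b (subsetP R_u w w_R) w_neq_u.
by rewrite (negbTE w_a).
Qed.

End Subtrees.

Lemma in_addopt (V : finType) (S : {set V}) v y :
  (y \in addopt S v) = (y \in S) || (v == Some y).
Proof. by case: v => [x|] /=; rewrite ?orbF // in_setU1 orbC eq_sym. Qed.

Lemma setU1I_notin (V : finType) (x : V) (S A : {set V}) :
  S \subset A -> x \notin A -> (x |: S) :&: A = S.
Proof. by move=> S_A x_A; rewrite setIUl (setIidPl S_A) disjoint_setI0 ?disjoints1 ?set0U. Qed.

Lemma addopt_setI_id (V : finType) (S A : {set V}) v :
  S \subset A -> (forall x, v = Some x -> x \notin A) -> addopt S v :&: A = S.
Proof.
by case: v => [x|] /= S_A v_A; [apply: setU1I_notin; last exact: v_A | apply/setIidPl].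
Qed.

Section Benefit.
Variables (V : finType) (par : V -> option V) (X : finType) (var : V -> X)
  (Q : finType) (Z : Q -> {set X}) (F : realFieldType) (Pr : Q -> F).
Local Notation anc := (anc par).
Local Notation T := (subtree par).
Local Notation vars := (vars par var).
Local Notation EI := (EI par var Z Pr).

Lemma vars_anc x w : x \in anc w -> vars w \subset vars x.
Proof.
move=> x_w; apply/imsetS/subsetP => y /setIdP[y_w y_inner]; apply/setIdP.
by split; first exact: subtree_trans y_w (anc_subtree x_w).
Qed.

Definition shadowed q w (R : {set V}) : bool :=
  [exists x in R :&: anc w, vars x \subset Z q].

Lemma IqE q w (R : {set V}) :
  Iq par var Z q w R = [&& w \in R, vars w \subset Z q & ~~ shadowed q w R].
Proof.
rewrite /Iq /shadowed negb_exists_in; congr (_ && (_ && _)).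
by apply: eq_forallb => x; rewrite in_setI; case: (x \in R).
Qed.

Lemma shadowed_eq q w (R1 R2 : {set V}) :
  {in anc w, R1 =i R2} -> shadowed q w R1 = shadowed q w R2.
Proof.
move=> R12; apply: eq_existsb => x; rewrite !in_setI.
by case x_w: (x \in anc w); rewrite ?andbF ?andbT ?R12.
Qed.

Lemma shadowed_addopt_anc q w y (R : {set V}) v :
  y \in R :&: anc w -> (if v is Some x then x \in anc y else true) ->
  shadowed q w (addopt R v) = shadowed q w R.
Proof.
case: v => [x|] //= y_R x_y; apply/existsP/existsP => -[z]; last first.
  by rewrite !inE => /andP[/andP[z_R z_w] z_q]; exists z; rewrite !inE z_R z_w orbT.
rewrite !inE -andbA => /and3P[/orP[/eqP->|z_R] z_w z_q]; last by exists z; rewrite !inE z_R z_w.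
by exists y; rewrite y_R (subset_trans (vars_anc x_y)).
Qed.

Lemma EI_eq w (R1 R2 : {set V}) : (w \in R1) = (w \in R2) ->
  (forall q, shadowed q w R1 = shadowed q w R2) -> EI w R1 = EI w R2.
Proof. by move=> w_R sh; apply: eq_bigr => q _; rewrite !IqE w_R sh. Qed.

End Benefit.

Section BenefitSplit.
Context {V : finType} {par : V -> option V} {X : finType} {var : V -> X}
  {Q : finType} {Z : Q -> {set X}} {F : realFieldType} {Pr : Q -> F} {c : V -> F}.
Local Notation anc := (anc par).
Local Notation T := (subtree par).
Local Notation EI := (EI par var Z Pr).
Local Notation B := (Bu par var Z Pr c).
Local Notation C := (Ctot par c).
Hypothesis anc_irrefl : forall x, x \notin anc x.
Variables (u : V) (R : {set V}) (v : option V).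
Hypotheses (R_sub : R \subset T u) (v_anc : if v is Some x then x \in anc u else true).

Lemma opt_notin_subtree b : b \in T u -> forall x, v = Some x -> x \notin T b.
Proof.
move=> b_u x v_x; move: v_anc; rewrite v_x; apply: contraL => x_b.
exact: (subtree_notin_anc anc_irrefl) (subtree_trans x_b b_u).
Qed.

Lemma Bu_addopt_root : B u (addopt R v) = \sum_(w in R) EI w (addopt R v) * C w.
Proof. by rewrite /Bu (addopt_setI_id R_sub (opt_notin_subtree (subtree_refl par u))). Qed.

Lemma EI_root : u \in R -> EI u (addopt R v) = EI u (addopt [set u] v).
Proof.
move=> u_R; apply: EI_eq => [|q]; first by rewrite !in_addopt u_R set11.
apply: shadowed_eq => y y_u; rewrite !in_addopt in_set1.
have y_R : y \notin R by apply: contraL y_u => /(subsetP R_sub); exact: subtree_notin_anc.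
have y_neq_u : y != u by apply: contraTneq y_u => ->; apply: anc_irrefl.
by rewrite (negbTE y_R) (negbTE y_neq_u).
Qed.

Lemma Bu_addopt_self : u \in R -> B u (addopt [set u] v) = EI u (addopt R v) * C u.
Proof.
move=> u_R; have u_u := subtree_refl par u.
by rewrite /Bu (addopt_setI_id _ (opt_notin_subtree u_u)) ?sub1set // big_set1 EI_root.
Qed.

Variable a : V.
Hypothesis par_a : par a = Some u.

Lemma anc_child_subtree_cases w y :
  w \in T a -> y \in R -> y \in anc w -> (y == u) || (y \in T a).
Proof.
move=> w_a y_R /anc_subtree w_y.
exact: (subtree_child_cases anc_irrefl par_a) (subsetP R_sub y y_R) w_y w_a.
Qed.

Lemma EI_child_unselected w : u \notin R -> w \in T a :&: R ->
  EI w (addopt R v) = EI w (addopt (T a :&: R) v).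
Proof.
move=> u_R /setIP[w_a w_R]; apply: EI_eq => [|q].
  by rewrite !in_addopt in_setI w_a w_R.
apply: shadowed_eq => y y_w; rewrite !in_addopt in_setI; congr (_ || _).
case y_R: (y \in R); rewrite ?andbF ?andbT //.
case/orP: (anc_child_subtree_cases w_a y_R y_w) => [/eqP y_u|-> //].
by rewrite -y_u y_R in u_R.
Qed.

Lemma EI_child_selected w : u \in R -> w \in T a :&: R ->
  EI w (addopt R v) = EI w (T a :&: R :|: [set u]).
Proof.
move=> u_R /setIP[w_a w_R]; apply: EI_eq => [|q].
  by rewrite in_addopt in_setU in_setI w_a w_R.
have u_w : u \in (T a :&: R :|: [set u]) :&: anc w.
  by rewrite in_setI in_setU in_set1 eqxx orbT (subtree_child_anc par_a w_a).
rewrite -(shadowed_addopt_anc _ _ q u_w v_anc); apply: shadowed_eq => y y_w.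
rewrite !in_addopt in_setU in_setI in_set1; congr (_ || _).
case y_R: (y \in R); rewrite ?andbF ?andbT /=.
  by rewrite orbC (anc_child_subtree_cases w_a y_R y_w).
by case: eqP => // y_u; rewrite y_u u_R in y_R.
Qed.

Lemma Bu_child_unselected : u \notin R ->
  B a (addopt (T a :&: R) v) = \sum_(w in T a :&: R) EI w (addopt R v) * C w.
Proof.
move=> u_R; rewrite /Bu (addopt_setI_id (subsetIl _ _) (opt_notin_subtree (par_subtree par_a))).
by apply: eq_bigr => w w_R; rewrite EI_child_unselected.
Qed.

Lemma Bu_child_selected : u \in R ->
  B a (T a :&: R :|: [set u]) = \sum_(w in T a :&: R) EI w (addopt R v) * C w.
Proof.
move=> u_R; rewrite /Bu {1}setUC setU1I_notin ?subsetIl ?(parent_notin_subtree anc_irrefl) //.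
by apply: eq_bigr => w w_R; rewrite EI_child_selected.
Qed.

End BenefitSplit.

Theorem lemma4 (V : finType) (par : V -> option V) (X : finType) (var : V -> X)
  (Q : finType) (Z : Q -> {set X}) (F : realFieldType) (Pr : Q -> F) (c : V -> F)
  (u lu ru : V) (Ru : {set V}) (v : option V) :
  rooted_binary_tree par ->
  is_prob Pr ->
  par lu = Some u -> par ru = Some u -> lu != ru ->
  Ru \subset subtree par u ->
  (if v is Some x then x \in anc par u else true) ->
  let Rr := subtree par ru :&: Ru in
  let Rl := subtree par lu :&: Ru in
  let B := Bu par var Z Pr c in
  B u (addopt Ru v) =
    (if u \in Ru then
       B u (addopt [set u] v) + B ru (Rr :|: [set u]) + B lu (Rl :|: [set u])
     else
       B ru (addopt Rr v) + B lu (addopt Rl v)).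
Proof.
move=> [_ anc_irrefl deg] _ par_l par_r l_r R_sub v_anc Rr Rl B; rewrite /Rr /Rl /B.
rewrite (Bu_addopt_root anc_irrefl R_sub v_anc).
rewrite (sum_subtree_children anc_irrefl _ (deg u) par_r par_l _ R_sub); last by rewrite eq_sym.
case: ifP => u_R.
  rewrite (Bu_addopt_self anc_irrefl R_sub v_anc u_R).
  by rewrite !(Bu_child_selected anc_irrefl R_sub v_anc _ u_R).
by rewrite add0r !(Bu_child_unselected anc_irrefl R_sub v_anc _ (negbT u_R)).
Qed.
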